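(* Let $M\in\mathbb{R}^{n\times n}$ be symmetric positive definite, $N\ge1$, timestep sizes $\delta_0,\dots,\delta_N>0$ fixed, $\theta_0,\theta_{-1}\in\mathbb{R}^n$ fixed, and let $\mathcal X$ be the set of admissible control values. Suppose $\bar P(\theta_i,u)=Q(\theta_i)+b(\theta_i,u)$ where $Q:\mathbb{R}^n\to\mathbb{R}$ and, for each $u\in\mathcal X$, $b(\cdot,u)$ are twice differentiable with locally Lipschitz second derivatives and curvature bounded with a constant $L$ independent of $u$, and $\|\partial^2 b/\partial\theta_i\partial u\|$ is uniformly bounded over all $\theta_i\in\mathbb{R}^n$, $u\in\mathcal X$. With $\bar E_i=\frac{1}{2\delta_i^2}\|\theta_i-(1+\delta_i/\delta_{i-1})\theta_{i-1}+(\delta_i/\delta_{i-1})\theta_{i-2}\|_M^2+\bar P(\theta_i,u_{\iota(i)})$ for $i=1,\dots,N$, let $J_\theta(\theta,u)$ be the block matrix with $(i,k)$ block $\partial^2\bar E_i/\partial\theta_i\partial\theta_k$ ($i,k=1,\dots,N$), and let $J_u(\theta,u)$ be the block-diagonal matrix with diagonal blocks $\partial^2\bar E_i/\partial\theta_i\partial u_{\iota(i)}$. Then (i) $\sigma_{\max}(J_\theta)$ and (ii) $\sigma_{\max}(J_u)$ are upper bounded uniformly over all $\theta=(\theta_1,\dots,\theta_N)$ and all controls in $\mathcal X$.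
   Context: $\|x\|_M^2=x^TMx$; $\sigma_{\max}$ is the largest singular value. A function is $L$-curvature bounded if $\phi+\frac L2\|\cdot\|^2$ is convex and $\nabla\phi$ is $L$-Lipschitz. The map $\iota$ assigns to each frame index the index of the control used at that frame. *)

From HB Require Import structures.
From mathcomp Require Import all_boot all_order all_algebra.
From mathcomp Require Import all_classical all_reals all_analysis.
Set Implicit Arguments. Unset Strict Implicit. Unset Printing Implicit Defensive.
Import Order.TTheory GRing.Theory Num.Theory.
Import numFieldNormedType.Exports.
Local Open Scope ring_scope.
Local Open Scope classical_set_scope.

Section Defs.
Variable R : realType.

Definition enorm (n : nat) (x : 'rV[R]_n) : R := Num.sqrt (\sum_(j < n) x 0 j ^+ 2).

Definition sqnormM (n : nat) (M : 'M[R]_n) (x : 'rV[R]_n) : R := (x *m M *m x^T) 0 0.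

Definition sigma_max (p q : nat) (A : 'M[R]_(p, q)) : R :=
  sup [set Num.sqrt a | a in [set a : R | eigenvalue (A^T *m A) a]].

Definition grad (n : nat) (f : 'rV[R]_n -> R) (x : 'rV[R]_n) : 'rV[R]_n :=
  \row_j derive f x (delta_mx 0 j).
Definition hess (n : nat) (f : 'rV[R]_n -> R) (x : 'rV[R]_n) : 'M[R]_n :=
  \matrix_(j, l) derive (fun y => derive f y (delta_mx 0 j)) x (delta_mx 0 l).

Definition twice_differentiable (n : nat) (f : 'rV[R]_n -> R) : Prop :=
  (forall x, differentiable f x) /\ (forall x, differentiable (grad f) x).

Definition hess_locally_lipschitz (n : nat) (f : 'rV[R]_n -> R) : Prop :=
  forall x, exists r : R, 0 < r /\ exists C : R, forall y z,
    `|y - x| < r -> `|z - x| < r -> `|hess f y - hess f z| <= C * `|y - z|.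

Definition convex_fun (n : nat) (g : 'rV[R]_n -> R) : Prop :=
  forall x y (t : R), 0 <= t -> t <= 1 ->
    g (t *: x + (1 - t) *: y) <= t * g x + (1 - t) * g y.

Definition curvature_bounded (n : nat) (L : R) (phi : 'rV[R]_n -> R) : Prop :=
  convex_fun (fun x => phi x + L / 2 * enorm x ^+ 2) /\
  (forall x y, enorm (grad phi x - grad phi y) <= L * enorm (x - y)).

Definition mixed_hess (n m : nat) (b : 'rV[R]_n -> 'rV[R]_m -> R)
  (th : 'rV[R]_n) (u : 'rV[R]_m) : 'M[R]_(n, m) :=
  \matrix_(j, l) derive (fun v => derive (fun y => b y v) th (delta_mx 0 j)) u (delta_mx 0 l).

(* theta at shifted index k = (paper index) + 1: k = 0 is theta_{-1}, k = 1 is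
   theta_0, k = i+2 is theta_{i+1} = row i of Th. *)
Definition thAt (N n : nat) (Th : 'M[R]_(N, n)) (th0 thm1 : 'rV[R]_n) (k : nat)
  : 'rV[R]_n :=
  match k with
  | 0 => thm1
  | 1 => th0
  | k'.+2 => match (insub k' : option 'I_N) with Some i => row i Th | None => 0 end
  end.

(* \bar E_{i+1}(theta, u) for i : 'I_N (paper index i+1 in 1..N);
   delta k is the paper's delta_k; row k of U is the control u_{k} *)
Definition Ebar (N n m K : nat) (M : 'M[R]_n) (delta : nat -> R)
  (th0 thm1 : 'rV[R]_n) (Q : 'rV[R]_n -> R) (b : 'rV[R]_n -> 'rV[R]_m -> R)
  (iota : 'I_N -> 'I_K) (i : 'I_N) (Th : 'M[R]_(N, n)) (U : 'M[R]_(K, m)) : R :=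
  let th := thAt Th th0 thm1 in
  let r := delta i.+1 / delta i in
  (2 * delta i.+1 ^+ 2)^-1 * sqnormM M (th i.+2 - (1 + r) *: th i.+1 + r *: th i)
  + (Q (th i.+2) + b (th i.+2) (row (iota i) U)).

Definition Jtheta_block (N n m K : nat) (E : 'I_N -> 'M[R]_(N, n) -> 'M[R]_(K, m) -> R)
  (Th : 'M[R]_(N, n)) (U : 'M[R]_(K, m)) (i k : 'I_N) : 'M[R]_n :=
  \matrix_(j, l) derive (fun Th' => derive (fun Th'' => E i Th'' U) Th' (delta_mx i j))
                        Th (delta_mx k l).

Definition Ju_block (N n m K : nat) (E : 'I_N -> 'M[R]_(N, n) -> 'M[R]_(K, m) -> R)
  (iota : 'I_N -> 'I_K) (Th : 'M[R]_(N, n)) (U : 'M[R]_(K, m)) (i : 'I_N) : 'M[R]_(n, m) :=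
  \matrix_(j, l) derive (fun U' => derive (fun Th' => E i Th' U') Th (delta_mx i j))
                        U (delta_mx (iota i) l).

Definition Jtheta (N n m K : nat) (E : 'I_N -> 'M[R]_(N, n) -> 'M[R]_(K, m) -> R)
  (Th : 'M[R]_(N, n)) (U : 'M[R]_(K, m)) :
  'M[R]_(\sum_(i < N) n, \sum_(k < N) n) :=
  @mxblock R N N (fun _ => n) (fun _ => n) (fun i k => Jtheta_block E Th U i k).

Definition Ju (N n m K : nat) (E : 'I_N -> 'M[R]_(N, n) -> 'M[R]_(K, m) -> R)
  (iota : 'I_N -> 'I_K) (Th : 'M[R]_(N, n)) (U : 'M[R]_(K, m)) :
  'M[R]_(\sum_(i < N) n, \sum_(k < N) m) :=
  @mxblock R N N (fun _ => n) (fun _ => m)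
    (fun i k => if i == k then Ju_block E iota Th U i else 0).

End Defs.

From HB Require Import structures.
From mathcomp Require Import all_boot all_order all_algebra.
From mathcomp Require Import all_classical all_reals all_analysis.
From mathcomp Require Import ring.
Import Order.TTheory GRing.Theory Num.Theory.
Import numFieldNormedType.Exports.
Local Open Scope ring_scope.
Local Open Scope classical_set_scope.

Set Implicit Arguments. Unset Strict Implicit. Unset Printing Implicit Defensive.

(* The kinetic part of each E_i is a quadratic form in theta, so its second
   derivatives are constants; the remaining second derivatives are those of Q
   and b(., u), bounded by L because their gradients are L-Lipschitz.  Hence
   every entry of J_theta is bounded independently of theta and u, and
   sigma_max is controlled by the entries through |a| <= sum_ij |G_ij| for an
   eigenvalue a of G = J^T J.  J_u is block diagonal with the mixed Hessians
   of b as blocks, and every eigenvalue of J^T J is then an eigenvalue of some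
   block, so sigma_max(J_u) is bounded by the uniform bound on the mixed
   Hessians. *)

Section eigenvalue_bound.
Variable R : realFieldType.

Lemma eigenvalue_norm_le q (G : 'M[R]_q) a :
  eigenvalue G a -> `|a| <= \sum_i \sum_j `|G i j|.
Proof.
move=> /eigenvalueP [v vG v0].
have [j1 vj1] : exists j, v 0 j != 0.
  apply/existsP; apply: contraNT v0; rewrite negb_exists => /forallP v0j.
  by apply/eqP/rowP => j; rewrite mxE; apply/eqP; have := v0j j; rewrite negbK.
pose jm := [arg max_(j > j1) `|v 0 j|]%O.
have vjm_max j : `|v 0 j| <= `|v 0 jm|.
  by rewrite /jm; case: arg_maxP => //= x _; apply.
have vjm_gt0 : 0 < `|v 0 jm| by apply: lt_le_trans (vjm_max j1); rewrite normr_gt0.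
have avjm : a * v 0 jm = \sum_i v 0 i * G i jm.
  by move/matrixP: vG => /(_ 0 jm); rewrite !mxE => <-.
have : `|a| * `|v 0 jm| <= `|v 0 jm| * \sum_i `|G i jm|.
  rewrite -normrM avjm mulr_sumr; apply: le_trans (ler_norm_sum _ _ _) _.
  by apply: ler_sum => i _; rewrite normrM ler_wpM2r.
rewrite mulrC ler_pM2l // => /le_trans; apply; apply: ler_sum => i _.
by rewrite (bigD1 jm) //= lerDl sumr_ge0.
Qed.

End eigenvalue_bound.

Section sigma_max.
Variable R : realType.

Lemma sigma_max_le p q (A : 'M[R]_(p, q)) C : 0 <= C ->
  (forall a, eigenvalue (A^T *m A) a -> Num.sqrt a <= C) -> sigma_max A <= C.
Proof.
move=> C0 AC; rewrite /sigma_max; set S := [set _ | _ in _].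
have [S_neq0|S0] := pselect (S !=set0).
  by apply: ge_sup => // _ [a /AC aC <-].
suff -> : S = set0 by rewrite sup0.
by apply/seteqP; split=> x // Sx; apply: S0; exists x.
Qed.

Lemma sqrt_eigenvalue_le_sigma_max p q (A : 'M[R]_(p, q)) a :
  eigenvalue (A^T *m A) a -> Num.sqrt a <= sigma_max A.
Proof.
move=> Aa; apply: ub_le_sup; last by exists a.
exists (Num.sqrt (\sum_i \sum_j `|(A^T *m A) i j|)) => _ [x /eigenvalue_norm_le Ax <-].
by apply: ler_wsqrtr; apply: le_trans Ax; apply: ler_norm.
Qed.

Lemma sigma_max_le_entrywise p q (A c : 'M[R]_(p, q)) :
  (forall i j, `|A i j| <= c i j) ->
  sigma_max A <= Num.sqrt (\sum_i \sum_j (c^T *m c) i j).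
Proof.
move=> Ac; apply: sigma_max_le => [|a /eigenvalue_norm_le Aa]; first exact: sqrtr_ge0.
apply/ler_wsqrtr/(le_trans (ler_norm a))/(le_trans Aa).
apply: ler_sum => i _; apply: ler_sum => j _; rewrite !mxE.
apply: le_trans (ler_norm_sum _ _ _) _; apply: ler_sum => k _.
by rewrite !mxE normrM ler_pM.
Qed.

Lemma eigenvalue_block_diag N n m (A_ : 'I_N -> 'M[R]_(n, m)) a :
  let G := @mxblock R N N (fun _ => n) (fun _ => m)
             (fun i k => if i == k then A_ i else 0) in
  eigenvalue (G^T *m G) a -> exists i, eigenvalue ((A_ i)^T *m A_ i) a.
Proof.
move=> G /eigenvalueP [v vG v0].
have ev : v = mxrow (fun j => submxrow v j) by rewrite submxrowK.
have GT : G^T = @mxblock R N N (fun _ => m) (fun _ => n)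
             (fun i k => if i == k then (A_ i)^T else 0).
  rewrite /G tr_mxblock; apply: eq_mxblock => i k.
  by rewrite eq_sym; case: eqP => [->|]; rewrite ?trmx0.
have vGT : v *m G^T = mxrow (fun j => submxrow v j *m (A_ j)^T).
  rewrite GT {1}ev mul_mxrow_mxblock; apply: eq_mxrow => j.
  by rewrite (bigD1 j) //= eqxx big1 ?addr0 // => i /negbTE ->; rewrite mulmx0.
have vGTG : v *m (G^T *m G) = mxrow (fun j => submxrow v j *m ((A_ j)^T *m A_ j)).
  rewrite mulmxA vGT /G mul_mxrow_mxblock; apply: eq_mxrow => j.
  by rewrite (bigD1 j) //= eqxx big1 ?addr0 ?mulmxA // => i /negbTE ->; rewrite mulmx0.
have [j vj] : exists j, submxrow v j != 0.
  apply/existsP; apply: contraNT v0; rewrite negb_exists => /forallP v0j.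
  rewrite ev; apply/eqP/matrixP => x y; rewrite [LHS]mxE [RHS]mxE.
  by have := v0j (tagnat.sig1 y); rewrite negbK => /eqP ->; rewrite mxE.
exists j; apply/eigenvalueP; exists (submxrow v j) => //.
move: vG; rewrite vGTG => /(congr1 (fun X => submxrow X j)); rewrite mxrowK => ->.
by apply/matrixP => x y; rewrite !mxE.
Qed.

Lemma sigma_max_block_diag_le N n m (A_ : 'I_N -> 'M[R]_(n, m)) C :
  0 <= C -> (forall i, sigma_max (A_ i) <= C) ->
  sigma_max (@mxblock R N N (fun _ => n) (fun _ => m)
               (fun i k => if i == k then A_ i else 0)) <= C.
Proof.
move=> C0 AC; apply: sigma_max_le => // a /eigenvalue_block_diag [i Aia].
exact: le_trans (sqrt_eigenvalue_le_sigma_max Aia) (AC i).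
Qed.

End sigma_max.

Section directional_derivative.
Variables (R : realFieldType) (V V' : normedModType R).

Lemma near_line (e u : V) (P : V -> Prop) :
  (\forall v \near u, P v) -> \forall h \near (0 : R)^', P (h *: e + u).
Proof.
have : (fun h : R => h *: e + u) @ 0^' --> u.
  rewrite -[X in _ --> X]add0r; apply: cvgD; last exact: cvg_cst.
  by rewrite -(scale0r e); apply: cvgZr_tmp; apply: nbhs_dnbhs.
by apply.
Qed.

Lemma derive_near_incr (f : V -> R) (g : V' -> R) a v a' v' :
  (\forall h \near (0 : R)^', f (h *: v + a) - f a = g (h *: v' + a') - g a') ->
  derive f a v = derive g a' v'.
Proof.
move=> fg; rewrite /derive; congr lim.
by apply/seteqP; split; apply: near_eq_cvg; near=> h; rewrite /= /shift (near fg h).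
Unshelve. all: by end_near.
Qed.

Lemma is_derive_incr (f : V -> R) (g : V' -> R) a v a' v' dg :
  (forall h : R, f (h *: v + a) - f a = g (h *: v' + a') - g a') ->
  is_derive a' v' g dg -> is_derive a v f dg.
Proof.
move=> fg [g_derivable <-].
have quot_eq : (fun h : R => h^-1 *: ((f \o shift a) (h *: v) - f a)) =
               (fun h : R => h^-1 *: ((g \o shift a') (h *: v') - g a')).
  by apply/funext => h; rewrite /= /shift fg.
split; first by rewrite /derivable quot_eq.
by apply: derive_near_incr; apply: nearW.
Qed.

Lemma derive_norm_le (f : V -> R) a v C :
  (forall h : R, h != 0 -> `|h^-1 * (f (h *: v + a) - f a)| <= C) ->
  `|derive f a v| <= C.
Proof.
move=> quotC; have C0 : 0 <= C by apply: le_trans (quotC 1 (oner_neq0 _)).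
have near_quotC : \forall h \near (0 : R)^', - C <= h^-1 * (f (h *: v + a) - f a) <= C.
  by near=> h; rewrite -ler_norml; apply: quotC; near: h; apply: nbhs_dnbhs_neq.
have [f_derivable|] := pselect (derivable f a v); last first.
  (* [derive] is a [lim], which is [0] when the quotients diverge *)
  by move=> not_derivable; rewrite /derive dvgP // normr0.
rewrite ler_norml /derive; apply/andP; split; [apply: limr_ge|apply: limr_le] => //;
  by apply: filterS near_quotC => h /andP[].
Unshelve. all: by end_near.
Qed.

End directional_derivative.

Section euclidean_norm.
Variables (R : realType) (n : nat).

Lemma enorm_entry_le (x : 'rV[R]_n) j : `|x 0 j| <= enorm x.
Proof.
rewrite /enorm -sqrtr_sqr; apply: ler_wsqrtr.
by rewrite (bigD1 j) //= lerDl sumr_ge0 // => k _; apply: sqr_ge0.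
Qed.

Lemma enormZ h (x : 'rV[R]_n) : enorm (h *: x) = `|h| * enorm x.
Proof.
rewrite /enorm (eq_bigr (fun j => h ^+ 2 * x 0 j ^+ 2)); last by move=> j _; rewrite mxE exprMn.
by rewrite -mulr_sumr sqrtrM ?sqr_ge0 // sqrtr_sqr.
Qed.

Lemma curvature_bounded_partial_lipschitz L (f : 'rV[R]_n -> R) y z j :
  curvature_bounded L f ->
  `|derive f y (delta_mx 0 j) - derive f z (delta_mx 0 j)| <= `|L| * enorm (y - z).
Proof.
move=> [_ grad_lipschitz]; have := enorm_entry_le (grad f y - grad f z) j.
rewrite !mxE => /le_trans; apply; apply: le_trans (grad_lipschitz y z) _.
by rewrite ler_wpM2r ?ler_norm ?sqrtr_ge0.
Qed.

Lemma partial_incr_quotient_le L (f : 'rV[R]_n -> R) y d j h :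
  curvature_bounded L f -> h != 0 ->
  `|h^-1 * (derive f (h *: d + y) (delta_mx 0 j) - derive f y (delta_mx 0 j))|
    <= `|L| * enorm d.
Proof.
move=> f_curv h0; have h_pos : 0 < `|h| by rewrite normr_gt0.
have := curvature_bounded_partial_lipschitz (h *: d + y) y j f_curv.
rewrite addrK enormZ mulrCA => lip.
by rewrite normrM normfV ler_pdivrMl.
Qed.

End euclidean_norm.

Section quadratic_form.
Variables (R : realType) (n : nat) (M : 'M[R]_n).

Definition polarM (x y : 'rV[R]_n) : R := (x *m M *m y^T) 0 0 + (y *m M *m x^T) 0 0.

Lemma polarM_affinel h (w x y : 'rV[R]_n) :
  polarM (h *: w + x) y = h * polarM w y + polarM x y.
Proof.
rewrite /polarM linearD /= linearZ /= !mulmxDl !mulmxDr -!scalemxAl -!scalemxAr !mxE /=.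
ring.
Qed.

Lemma sqnormM_incr h (w x : 'rV[R]_n) :
  sqnormM M (h *: w + x) - sqnormM M x = h * (polarM x w + h * sqnormM M w).
Proof.
rewrite /sqnormM /polarM linearD /= linearZ /= !mulmxDl !mulmxDr -!scalemxAl -!scalemxAr.
rewrite !mxE /=; ring.
Qed.

Lemma is_derive_sqnormM (x w : 'rV[R]_n) : is_derive x w (sqnormM M) (polarM x w).
Proof.
have quot_cvg : (fun h : R => h^-1 *: ((sqnormM M \o shift x) (h *: w) - sqnormM M x))
                  @ 0^' --> polarM x w.
  have lim0 : (fun h : R => polarM x w + h * sqnormM M w) @ 0^' --> polarM x w.
    rewrite -[X in _ --> X]addr0 -[X in _ --> _ + X](mul0r (sqnormM M w)).
    by apply: cvgD; [exact: cvg_cst|apply: cvgMr_tmp; exact: nbhs_dnbhs].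
  apply: cvg_trans lim0; apply: near_eq_cvg; near=> h.
  rewrite /= /shift sqnormM_incr [RHS]mulrA mulVf ?mul1r //.
  by near: h; apply: nbhs_dnbhs_neq.
by split; [apply/cvg_ex; exists (polarM x w)|apply: cvg_lim].
Unshelve. all: by end_near.
Qed.

End quadratic_form.

Lemma row_delta_mx (R : pzRingType) p q (i : 'I_p) (j : 'I_q) :
  row i (delta_mx i j : 'M[R]_(p, q)) = delta_mx 0 j.
Proof. by rewrite rowE mul_delta_mx. Qed.

Section Ebar_derivatives.
Variables (R : realType) (n m N K : nat) (M : 'M[R]_n) (delta : nat -> R)
  (th0 thm1 : 'rV[R]_n) (Q : 'rV[R]_n -> R) (b : 'rV[R]_n -> 'rV[R]_m -> R)
  (iota : 'I_N -> 'I_K).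
Let E := Ebar M delta th0 thm1 Q b iota.

Definition second_diff (Th : 'M[R]_(N, n)) (x y : 'rV[R]_n) (i : nat) : 'rV[R]_n :=
  thAt Th x y i.+2 - (1 + delta i.+1 / delta i) *: thAt Th x y i.+1
  + (delta i.+1 / delta i) *: thAt Th x y i.

Lemma thAt_affine h (D Th : 'M[R]_(N, n)) k :
  thAt (h *: D + Th) th0 thm1 k = h *: thAt D 0 0 k + thAt Th th0 thm1 k.
Proof.
case: k => [|[|k]] /=; rewrite ?scaler0 ?add0r //.
by case: insub => [i|]; rewrite ?linearP // scaler0 addr0.
Qed.

Lemma second_diff_affine h (D Th : 'M[R]_(N, n)) i :
  second_diff (h *: D + Th) th0 thm1 i = h *: second_diff D 0 0 i + second_diff Th th0 thm1 i.
Proof. by rewrite /second_diff !thAt_affine; apply/rowP => k; rewrite !mxE; ring. Qed.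

Lemma thAt_row (Th : 'M[R]_(N, n)) x y (i : 'I_N) : thAt Th x y i.+2 = row i Th.
Proof. by rewrite /= valK. Qed.

Lemma EbarE (i : 'I_N) Th U :
  E i Th U = (2 * delta i.+1 ^+ 2)^-1 * sqnormM M (second_diff Th th0 thm1 i)
             + (Q (row i Th) + b (row i Th) (row (iota i) U)).
Proof. by rewrite /E /Ebar; cbv zeta; rewrite -(thAt_row Th th0 thm1). Qed.

Lemma derive_Ebar (i : 'I_N) Th U D :
  differentiable Q (row i Th) -> differentiable (b^~ (row (iota i) U)) (row i Th) ->
  derive (fun Th' => E i Th' U) Th D =
    (2 * delta i.+1 ^+ 2)^-1 * polarM M (second_diff Th th0 thm1 i) (second_diff D 0 0 i)
    + (derive Q (row i Th) (row i D) + derive (b^~ (row (iota i) U)) (row i Th) (row i D)).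
Proof.
move=> dQ db; set u := row (iota i) U.
have row_incr (f : 'rV[R]_n -> R) h :
    f (row i (h *: D + Th)) - f (row i Th) = f (h *: row i D + row i Th) - f (row i Th).
  by rewrite linearP.
have d_quad : is_derive Th D (fun Th' => sqnormM M (second_diff Th' th0 thm1 i))
                (polarM M (second_diff Th th0 thm1 i) (second_diff D 0 0 i)).
  have quad_incr h : sqnormM M (second_diff (h *: D + Th) th0 thm1 i)
                      - sqnormM M (second_diff Th th0 thm1 i)
    = sqnormM M (h *: second_diff D 0 0 i + second_diff Th th0 thm1 i)
      - sqnormM M (second_diff Th th0 thm1 i) by rewrite second_diff_affine.
  exact: is_derive_incr quad_incr (is_derive_sqnormM _ _ _).
have d_Q : is_derive Th D (fun Th' => Q (row i Th')) (derive Q (row i Th) (row i D)).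
  exact: is_derive_incr (row_incr Q) (derivableP (diff_derivable dQ)).
have d_b : is_derive Th D (fun Th' => b (row i Th') u) (derive (b^~ u) (row i Th) (row i D)).
  exact: is_derive_incr (row_incr (b^~ u)) (derivableP (diff_derivable db)).
have -> : (fun Th' => E i Th' U) =
    (2 * delta i.+1 ^+ 2)^-1 \*: (fun Th' => sqnormM M (second_diff Th' th0 thm1 i))
    + ((fun Th' => Q (row i Th')) + (fun Th' => b (row i Th') u)).
  by apply/funext => Th'; rewrite EbarE.
by rewrite derive_val.
Qed.

Definition Jtheta_entry_bound (L : R) (i k : 'I_N) (j l : 'I_n) : R :=
  `|(2 * delta i.+1 ^+ 2)^-1 *
      polarM M (second_diff (delta_mx k l) 0 0 i) (second_diff (delta_mx i j) 0 0 i)|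
  + `|L| * enorm (row i (delta_mx k l : 'M[R]_(N, n))) *+ 2.

Lemma Jtheta_block_entry_le L (i k : 'I_N) (j l : 'I_n) Th U :
  (forall x, differentiable Q x) -> curvature_bounded L Q ->
  (forall x, differentiable (b^~ (row (iota i) U)) x) ->
  curvature_bounded L (b^~ (row (iota i) U)) ->
  `|Jtheta_block E Th U i k j l| <= Jtheta_entry_bound L i k j l.
Proof.
move=> dQ Q_curv db b_curv; rewrite /Jtheta_block mxE; apply: derive_norm_le => h h0.
rewrite !derive_Ebar // second_diff_affine polarM_affinel linearP /= row_delta_mx.
set c := (2 * _)^-1; set P' := polarM _ _ _.
have -> : forall P Q1 Q0 B1 B0 : R,
    h^-1 * (c * (h * P' + P) + (Q1 + B1) - (c * P + (Q0 + B0)))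
    = c * P' + (h^-1 * (Q1 - Q0) + h^-1 * (B1 - B0)) by move=> *; field.
rewrite /Jtheta_entry_bound mulr2n; apply: le_trans (ler_normD _ _) _.
rewrite lerD //; apply: le_trans (ler_normD _ _) _.
by rewrite lerD // partial_incr_quotient_le.
Qed.

Lemma Ju_block_mixed_hess (i : 'I_N) Th U :
  differentiable Q (row i Th) ->
  (\forall v \near row (iota i) U, differentiable (b^~ v) (row i Th)) ->
  Ju_block E iota Th U i = mixed_hess b (row i Th) (row (iota i) U).
Proof.
move=> dQ db_near; apply/matrixP => j l; rewrite !mxE.
apply: derive_near_incr; apply: filterS (near_line (delta_mx 0 l) db_near) => h db.
have row_shift : row (iota i) (h *: delta_mx (iota i) l + U) = h *: delta_mx 0 l + row (iota i) U.
  by rewrite linearP /= row_delta_mx.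
rewrite !derive_Ebar ?row_shift //; last exact: nbhs_singleton db_near.
by rewrite row_delta_mx; ring.
Qed.

End Ebar_derivatives.

Theorem lemma3 (R : realType) (n m N K : nat)
  (M : 'M[R]_n) (delta : nat -> R) (th0 thm1 : 'rV[R]_n)
  (X : set 'rV[R]_m) (iota : 'I_N -> 'I_K)
  (Q : 'rV[R]_n -> R) (b : 'rV[R]_n -> 'rV[R]_m -> R) (L : R) :
  M^T = M ->
  (forall x : 'rV[R]_n, x != 0 -> 0 < sqnormM M x) ->
  (1 <= N)%N ->
  (forall i : nat, (i <= N)%N -> 0 < delta i) ->
  twice_differentiable Q -> hess_locally_lipschitz Q -> curvature_bounded L Q ->
  (forall u, X u ->
     [/\ twice_differentiable (fun th => b th u),
         hess_locally_lipschitz (fun th => b th u) &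
         curvature_bounded L (fun th => b th u)]) ->
  (* the mixed derivative d^2 b/(d theta d u) exists on X *)
  (forall u, X u -> \forall v \near u, forall th, differentiable (fun y => b y v) th) ->
  (forall u, X u -> forall th (j : 'I_n),
     differentiable (fun v => derive (fun y => b y v) th (delta_mx 0 j)) u) ->
  (exists B : R, forall th u, X u -> sigma_max (mixed_hess b th u) <= B) ->
  let E := Ebar M delta th0 thm1 Q b iota in
  (exists C : R, forall (Th : 'M[R]_(N, n)) (U : 'M[R]_(K, m)),
     (forall k, X (row k U)) -> sigma_max (Jtheta E Th U) <= C) /\
  (exists C : R, forall (Th : 'M[R]_(N, n)) (U : 'M[R]_(K, m)),
     (forall k, X (row k U)) -> sigma_max (Ju E iota Th U) <= C).
Proof.
move=> _ _ _ _ [dQ _] _ Q_curv b_reg b_diff_near _ [B mixed_hess_le] E; split.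
  pose c := @mxblock R N N (fun _ => n) (fun _ => n)
              (fun i k => \matrix_(j, l) Jtheta_entry_bound M delta L i k j l).
  exists (Num.sqrt (\sum_s \sum_t (c^T *m c) s t)) => Th U XU.
  apply: sigma_max_le_entrywise => s t; rewrite [Jtheta _ _ _ _ _]mxE [c s t]mxE mxE.
  have [[db _] _ b_curv] := b_reg _ (XU (iota (tagnat.sig1 s))).
  exact: Jtheta_block_entry_le.
exists (Order.max B 0) => Th U XU.
apply: sigma_max_block_diag_le => [|i]; first by rewrite le_max lexx orbT.
rewrite Ju_block_mixed_hess //; last by apply: filterS (b_diff_near _ (XU (iota i))) => v; apply.
by apply: le_trans (mixed_hess_le _ _ (XU (iota i))) _; rewrite le_max lexx.
Qed.
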